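(* In the one-way trading setting with price elasticity, for every $\pi\ge1$, $$\Phi_\Delta(\pi)\ \le\ \bar\Phi(\pi):=\frac{2\Delta}{\pi\left(1+\sqrt{1-1/\pi}\right)}\,(\ln\theta+1),\qquad\theta=M/m.$$
   Context: Fix $\Delta>0$, $0<m\le M$, $\theta=M/m$. Let $\mathcal G_{PE}$ be the set of functions $g(v)=(p-f(v))\,v$ on $[0,\Delta]$, where $p\in[m,M]$ and $f:[0,\Delta]\to[0,\infty)$ is convex and differentiable with $f(0)=0$. An input is a finite sequence $\sigma=(g_1,\dots,g_T)$, $T\ge1$, with $g_t(v)=(p(t)-f_t(v))v\in\mathcal G_{PE}$; $\sigma^{[1:t]}=(g_1,\dots,g_t)$ ($\sigma^{[1:0]}$ empty). $\eta_{OPT}(\sigma^{[1:t]})$ is the optimal value of $\max\sum_{s=1}^t g_s(v_s)$ s.t. $\sum_{s=1}^t v_s\le\Delta$, $v_s\ge0$ (and $0$ for the empty sequence). For $\pi\ge1$, CR-Pursuit($\pi$) outputs at time $t$ the smallest $\bar v_t\in[0,\Delta]$ with $g_t(\bar v_t)=\frac1\pi\big[\eta_{OPT}(\sigma^{[1:t]})-\eta_{OPT}(\sigma^{[1:t-1]})\big]$. $\Phi_\Delta(\pi)$ is the supremum over all such inputs of $\sum_{t=1}^T\bar v_t$. *)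

From Stdlib Require Import Reals Lra.
Open Scope R_scope.

Fixpoint sum1 (F : nat -> R) (n : nat) : R :=
  match n with
  | O => 0
  | S k => sum1 F k + F (S k)
  end.

Definition convex_on (f : R -> R) (a b : R) : Prop :=
  forall x y l, a <= x <= b -> a <= y <= b -> 0 <= l <= 1 ->
    f (l * x + (1 - l) * y) <= l * f x + (1 - l) * f y.

(* differentiability of f on the closed interval [a,b]
   (one-sided derivatives at the endpoints) *)
Definition differentiable_on (f : R -> R) (a b : R) : Prop :=
  forall x, a <= x <= b ->
    exists l, limit1_in (fun y => (f y - f x) / (y - x))
                        (fun y => a <= y <= b /\ y <> x) l x.

Definition elasticity_fun (Delta : R) (f : R -> R) : Prop :=
  convex_on f 0 Delta /\ differentiable_on f 0 Delta /\ f 0 = 0 /\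
  (forall v, 0 <= v <= Delta -> 0 <= f v).

Definition gPE (p : R) (f : R -> R) (v : R) : R := (p - f v) * v.

(* Set of achievable objective values of the offline problem on the
   prefix sigma^[1:t] of the input (p, f) indexed by s = 1..t. *)
Definition feasible_values (Delta : R) (p : nat -> R) (f : nat -> R -> R)
  (t : nat) (r : R) : Prop :=
  exists v : nat -> R,
    (forall s, (1 <= s <= t)%nat -> 0 <= v s) /\
    sum1 v t <= Delta /\
    r = sum1 (fun s => gPE (p s) (f s) (v s)) t.

Definition is_eta_opt (Delta : R) (p : nat -> R) (f : nat -> R -> R)
  (t : nat) (eta : R) : Prop :=
  is_lub (feasible_values Delta p f t) eta.

Definition cr_pursuit_output (Delta : R) (p : R) (f : R -> R)
  (target : R) (x : R) : Prop :=
  0 <= x <= Delta /\ gPE p f x = target /\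
  (forall w, 0 <= w <= Delta -> gPE p f w = target -> x <= w).

(* Let d_t = eta_t - eta_(t-1) be the increment of the offline optimum and
   s = sqrt (1 - 1/pi).  Per step, g_t lies above the parabola
   p_t v - (f_t(w)/w) v^2 below any point w, and taking w a maximiser of g_t
   (so that d_t <= g_t(w)) puts a solution of g_t(v) = d_t/pi below
   2 d_t / (pi p_t (1 + s)).  Globally, an exchange argument between concave
   allocations shows that the increments at goods priced at most y sum to at
   most y Delta; Abel summation over the prices then gives
   sum_t d_t / p_t <= Delta (1 + ln (M/m)). *)

From Stdlib Require Import Reals Lra Lia List Classical.
Open Scope R_scope.

Lemma Rdiv_nonneg x y : 0 <= x -> 0 < y -> 0 <= x / y.
Proof. intros. unfold Rdiv. apply Rmult_le_pos; [|apply Rlt_le, Rinv_0_lt_compat]; lra. Qed.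

Lemma Rdiv_le_one x y : x <= y -> 0 < y -> x / y <= 1.
Proof. intros. apply (Rmult_le_reg_r y); [lra|]. unfold Rdiv. rewrite Rmult_assoc, Rinv_l; lra. Qed.

Lemma sum1_ext F G n :
  (forall s, (1 <= s <= n)%nat -> F s = G s) -> sum1 F n = sum1 G n.
Proof.
  induction n as [|n IH]; intros H; simpl; [reflexivity|].
  rewrite IH, H; [reflexivity | lia | intros; apply H; lia].
Qed.

Lemma sum1_plus F G n : sum1 (fun s => F s + G s) n = sum1 F n + sum1 G n.
Proof. induction n; simpl; [|rewrite IHn]; lra. Qed.

Lemma sum1_minus F G n : sum1 (fun s => F s - G s) n = sum1 F n - sum1 G n.
Proof. induction n; simpl; [|rewrite IHn]; lra. Qed.

Lemma sum1_scal c F n : sum1 (fun s => c * F s) n = c * sum1 F n.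
Proof. induction n; simpl; [|rewrite IHn]; lra. Qed.

Lemma sum1_le F G n :
  (forall s, (1 <= s <= n)%nat -> F s <= G s) -> sum1 F n <= sum1 G n.
Proof.
  induction n as [|n IH]; intros H; simpl; [lra|].
  assert (sum1 F n <= sum1 G n) by (apply IH; intros; apply H; lia).
  assert (F (S n) <= G (S n)) by (apply H; lia).
  lra.
Qed.

Lemma sum1_nonneg F n :
  (forall s, (1 <= s <= n)%nat -> 0 <= F s) -> 0 <= sum1 F n.
Proof.
  induction n as [|n IH]; intros H; simpl; [lra|].
  assert (0 <= sum1 F n) by (apply IH; intros; apply H; lia).
  assert (0 <= F (S n)) by (apply H; lia).
  lra.
Qed.

Lemma sum1_term_le F n s :
  (forall s, (1 <= s <= n)%nat -> 0 <= F s) -> (1 <= s <= n)%nat -> F s <= sum1 F n.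
Proof.
  induction n as [|n IH]; intros H Hs; [lia|]. simpl.
  destruct (Nat.eq_dec s (S n)) as [->|Hne].
  - assert (0 <= sum1 F n) by (apply sum1_nonneg; intros; apply H; lia). lra.
  - assert (F s <= sum1 F n) by (apply IH; [intros; apply H|]; lia).
    assert (0 <= F (S n)) by (apply H; lia). lra.
Qed.

Lemma differentiable_on_continuous_within f a b x :
  differentiable_on f a b -> a <= x <= b ->
  limit1_in f (fun y => a <= y <= b) (f x) x.
Proof.
  intros Hd Hx. destruct (Hd x Hx) as [l Hl].
  assert (Hlim : limit1_in (fun y => (y - x) * ((f y - f x) / (y - x)) + f x)
                   (fun y => a <= y <= b /\ y <> x) ((x - x) * l + f x) x).
  { apply limit_plus; [apply limit_mul; [apply limit_minus|]|].
    - apply lim_x.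
    - exact (limit_free (fun _ => x) _ x x).
    - exact Hl.
    - exact (limit_free f _ x x). }
  replace ((x - x) * l + f x) with (f x) in Hlim by ring.
  intros eps Heps. destruct (Hlim eps Heps) as [del [Hdel Hclose]].
  exists del. split; [exact Hdel|]. intros y [Hy Hyx].
  destruct (Req_dec y x) as [->|Hne].
  - simpl. unfold R_dist. rewrite Rminus_diag, Rabs_R0. exact Heps.
  - specialize (Hclose y (conj (conj Hy Hne) Hyx)). simpl in *.
    replace ((y - x) * ((f y - f x) / (y - x)) + f x) with (f y) in Hclose
      by (field; lra).
    exact Hclose.
Qed.

(* Composing with [clamp] extends a function on [0, D] to R by constancy, so
   that Stdlib's extreme and intermediate value theorems, stated for globally
   continuous functions, apply. *)
Definition clamp (D v : R) : R := Rmax 0 (Rmin D v).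

Lemma clamp_in D v : 0 <= D -> 0 <= clamp D v <= D.
Proof. intros. unfold clamp, Rmax, Rmin. repeat destruct Rle_dec; lra. Qed.

Lemma clamp_id D v : 0 <= v <= D -> clamp D v = v.
Proof. intros. unfold clamp, Rmax, Rmin. repeat destruct Rle_dec; lra. Qed.

Lemma clamp_dist D x y : 0 <= D -> Rabs (clamp D y - clamp D x) <= Rabs (y - x).
Proof.
  intros. unfold clamp, Rmax, Rmin.
  repeat destruct Rle_dec; unfold Rabs; repeat destruct Rcase_abs; lra.
Qed.

Lemma continuity_clamp_comp g D : 0 <= D ->
  (forall x, 0 <= x <= D -> limit1_in g (fun y => 0 <= y <= D) (g x) x) ->
  continuity (fun v => g (clamp D v)).
Proof.
  intros HD Hg a eps Heps.
  destruct (Hg (clamp D a) (clamp_in D a HD) eps Heps) as [del [Hdel Hclose]].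
  exists del. split; [exact Hdel|]. intros x [_ Hx]. simpl in *. unfold R_dist in *.
  apply Hclose. split; [apply clamp_in; exact HD|].
  eapply Rle_lt_trans; [apply clamp_dist; exact HD | exact Hx].
Qed.

Section ElasticityFunction.

Variables (Delta p : R) (f : R -> R).
Hypothesis Hf : elasticity_fun Delta f.

Lemma elasticity_secant x w :
  0 <= x <= w -> w <= Delta -> 0 < w -> f x <= x / w * f w.
Proof.
  intros Hx Hw Hw0. destruct Hf as [Hconv [_ [Hf0 _]]].
  assert (Hl : 0 <= x / w <= 1).
  { split; [apply Rdiv_nonneg | apply Rdiv_le_one]; lra. }
  pose proof (Hconv w 0 (x / w) ltac:(lra) ltac:(lra) Hl) as Hc.
  replace (x / w * w + (1 - x / w) * 0) with x in Hc by (field; lra).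
  rewrite Hf0 in Hc. lra.
Qed.

Lemma elasticity_nondecreasing x y : 0 <= x <= y -> y <= Delta -> f x <= f y.
Proof.
  intros Hx Hy. destruct (Req_dec y 0) as [->|Hy0].
  - replace x with 0 by lra. lra.
  - pose proof (elasticity_secant x y Hx Hy ltac:(lra)).
    destruct Hf as [_ [_ [_ Hnn]]]. assert (0 <= f y) by (apply Hnn; lra).
    assert (x / y <= 1) by (apply Rdiv_le_one; lra).
    nra.
Qed.

Lemma gPE_0 : gPE p f 0 = 0.
Proof. unfold gPE. ring. Qed.

Lemma gPE_le_linear v : 0 <= v <= Delta -> gPE p f v <= p * v.
Proof.
  intros Hv. destruct Hf as [_ [_ [_ Hnn]]]. specialize (Hnn v Hv).
  unfold gPE. nra.
Qed.

(* v f(v) is convex because f is convex, nonnegative and nondecreasing. *)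
Lemma gPE_concave x y l :
  0 <= x <= Delta -> 0 <= y <= Delta -> 0 <= l <= 1 ->
  l * gPE p f x + (1 - l) * gPE p f y <= gPE p f (l * x + (1 - l) * y).
Proof.
  intros Hx Hy Hl. unfold gPE. set (z := l * x + (1 - l) * y).
  assert (Hz : 0 <= z) by (unfold z; nra).
  assert (Hconv : f z <= l * f x + (1 - l) * f y) by (apply (proj1 Hf); auto).
  assert (Hmono : 0 <= (x - y) * (f x - f y)).
  { destruct (Rle_dec x y).
    - assert (f x <= f y) by (apply elasticity_nondecreasing; lra). nra.
    - assert (f y <= f x) by (apply elasticity_nondecreasing; lra). nra. }
  assert (z * f z <= z * (l * f x + (1 - l) * f y)) by (apply Rmult_le_compat_l; auto).
  assert (0 <= l * (1 - l)) by nra.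
  unfold z in *. nra.
Qed.

Lemma gPE_exchange a b lam :
  0 <= a <= Delta -> 0 <= b <= Delta -> 0 <= lam <= 1 ->
  gPE p f a + gPE p f b <=
  gPE p f (b + lam * (a - b)) + gPE p f (a - lam * (a - b)).
Proof.
  intros Ha Hb Hl.
  pose proof (gPE_concave a b lam Ha Hb Hl).
  pose proof (gPE_concave a b (1 - lam) Ha Hb ltac:(lra)).
  replace (b + lam * (a - b)) with (lam * a + (1 - lam) * b) by ring.
  replace (a - lam * (a - b)) with ((1 - lam) * a + (1 - (1 - lam)) * b) by ring.
  lra.
Qed.

Lemma gPE_ge_secant r w :
  0 <= r <= w -> w <= Delta -> 0 < w -> p * r - f w / w * (r * r) <= gPE p f r.
Proof.
  intros Hr Hw Hw0. pose proof (elasticity_secant r w Hr Hw Hw0).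
  unfold gPE. replace (f w / w * (r * r)) with (r / w * f w * r) by (field; lra).
  nra.
Qed.

Lemma gPE_continuous_within x : 0 <= x <= Delta ->
  limit1_in (gPE p f) (fun y => 0 <= y <= Delta) (gPE p f x) x.
Proof.
  intros Hx. unfold gPE.
  apply limit_mul; [apply limit_minus|].
  - exact (limit_free (fun _ => p) _ x x).
  - apply differentiable_on_continuous_within; [apply Hf | exact Hx].
  - apply lim_x.
Qed.

Hypothesis HD : 0 <= Delta.

Lemma continuity_gPE_clamp : continuity (fun v => gPE p f (clamp Delta v)).
Proof. apply continuity_clamp_comp; [exact HD | exact gPE_continuous_within]. Qed.

Lemma gPE_attains_max :
  exists w, 0 <= w <= Delta /\ forall x, 0 <= x <= Delta -> gPE p f x <= gPE p f w.
Proof.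
  destruct (continuity_ab_maj _ 0 Delta HD (fun c _ => continuity_gPE_clamp c))
    as [w [Hmax Hw]].
  exists w. split; [exact Hw|]. intros x Hx.
  specialize (Hmax x Hx). rewrite !clamp_id in Hmax by lra. exact Hmax.
Qed.

Lemma gPE_intermediate tau z :
  0 <= tau -> 0 <= z <= Delta -> tau <= gPE p f z ->
  exists x, 0 <= x <= z /\ gPE p f x = tau.
Proof.
  intros Htau Hz Hgz.
  set (h := fun v => gPE p f (clamp Delta v) - tau).
  assert (Hh : continuity h).
  { apply continuity_minus; [exact continuity_gPE_clamp | apply continuity_const].
    intros ? ?; reflexivity. }
  assert (Hsign : h 0 * h z <= 0).
  { unfold h. rewrite !clamp_id by lra. rewrite gPE_0. nra. }
  destruct (IVT_cor h 0 z Hh ltac:(lra) Hsign) as [x [Hx Hhx]].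
  exists x. split; [exact Hx|]. unfold h in Hhx. rewrite clamp_id in Hhx by lra. lra.
Qed.

Lemma cr_pursuit_output_le tau x z :
  cr_pursuit_output Delta p f tau x -> 0 <= tau -> 0 <= z <= Delta ->
  tau <= gPE p f z -> x <= z.
Proof.
  intros [_ [_ Hmin]] Htau Hz Hgz.
  destruct (gPE_intermediate tau z Htau Hz Hgz) as [y [Hy Hgy]].
  assert (x <= y) by (apply Hmin; [lra | exact Hgy]). lra.
Qed.

End ElasticityFunction.

Lemma four_secant_mul_gPE_le p f w :
  0 < w -> 4 * (f w / w) * gPE p f w <= p * p.
Proof.
  intros Hw. unfold gPE. set (a := f w / w).
  replace (f w) with (a * w) by (unfold a; field; lra).
  pose proof (Rle_0_sqr (p - 2 * a * w)). unfold Rsqr in *. nra.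
Qed.

(* With s = sqrt (1 - 1/piv), the point r = 2 tau / (p (1 + s)) satisfies
   p r - a r^2 = tau (2 / (1 + s) - c / (1 + s)^2) with c = 4 a tau / p^2 <= 1 - s^2,
   and the right-hand side is >= tau. *)
Lemma quadratic_pursuit_bound p a tau piv :
  0 < p -> 0 <= a -> 0 <= tau -> 1 <= piv -> 4 * a * tau * piv <= p * p ->
  let r := 2 * tau / (p * (1 + sqrt (1 - 1 / piv))) in
  tau <= p * r - a * (r * r).
Proof.
  intros Hp Ha Htau Hpi Hdisc r.
  set (s := sqrt (1 - 1 / piv)) in r.
  assert (Hs : 0 <= s) by apply sqrt_pos.
  assert (Hs2 : s * s = 1 - 1 / piv).
  { apply sqrt_sqrt. pose proof (Rdiv_le_one 1 piv). lra. }
  assert (Hc : 4 * a * tau <= p * p * (1 - s * s)).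
  { rewrite Hs2. apply (Rmult_le_reg_r piv); [lra|].
    replace (p * p * (1 - (1 - 1 / piv)) * piv) with (p * p) by (field; lra). lra. }
  set (u := p * (1 + s)).
  assert (Hu : 0 < u) by (unfold u; nra).
  replace (p * r - a * (r * r)) with (tau * (2 * p * u - 4 * a * tau) / (u * u))
    by (unfold r, u; field; lra).
  apply (Rmult_le_reg_r (u * u)); [nra|].
  replace (tau * (2 * p * u - 4 * a * tau) / (u * u) * (u * u))
    with (tau * (2 * p * u - 4 * a * tau)) by (field; lra).
  assert (Hu2 : u * u = 2 * p * u - p * p * (1 - s * s)) by (unfold u; ring).
  rewrite Hu2. nra.
Qed.

Lemma cr_pursuit_output_le_increment Delta p f piv d w x :
  elasticity_fun Delta f -> 0 < p -> 1 <= piv -> 0 <= d ->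
  0 <= w <= Delta -> d <= gPE p f w ->
  cr_pursuit_output Delta p f (d / piv) x ->
  x <= 2 * (d / piv) / (p * (1 + sqrt (1 - 1 / piv))).
Proof.
  intros Hf Hp Hpi Hd Hw Hdw Hx.
  set (tau := d / piv) in *. set (r := 2 * tau / (p * (1 + sqrt (1 - 1 / piv)))).
  assert (Hs : 0 <= sqrt (1 - 1 / piv)) by apply sqrt_pos.
  assert (Htau : 0 <= tau) by (apply Rdiv_nonneg; lra).
  assert (Htau_d : tau * piv = d) by (unfold tau; field; lra).
  assert (Hr : 0 <= r) by (apply Rdiv_nonneg; nra).
  destruct (Req_dec tau 0) as [Htau0|Htau0].
  { apply Rle_trans with 0; [|exact Hr].
    apply (cr_pursuit_output_le Delta p f Hf ltac:(lra) tau x 0 Hx); [lra | lra |].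
    rewrite gPE_0. lra. }
  assert (Hw0 : 0 < w).
  { destruct (Req_dec w 0) as [->|]; [|lra]. rewrite gPE_0 in Hdw. nra. }
  set (a := f w / w).
  assert (Ha : 0 <= a).
  { apply Rdiv_nonneg; [apply (proj2 (proj2 (proj2 Hf))) |]; lra. }
  assert (Hdisc : 4 * a * tau * piv <= p * p).
  { pose proof (four_secant_mul_gPE_le p f w Hw0). fold a in H. nra. }
  destruct (Rle_dec r w) as [Hrw|Hrw].
  - apply (cr_pursuit_output_le Delta p f Hf ltac:(lra) tau x r Hx); [lra | lra |].
    pose proof (quadratic_pursuit_bound p a tau piv Hp Ha Htau Hpi Hdisc) as Hquad.
    cbv zeta in Hquad. fold r in Hquad.
    pose proof (gPE_ge_secant Delta p f Hf r w ltac:(lra) ltac:(lra) Hw0). fold a in H.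
    lra.
  - apply Rle_trans with w; [|lra].
    apply (cr_pursuit_output_le Delta p f Hf ltac:(lra) tau x w Hx); nra.
Qed.

Lemma is_lub_approx E l eps : is_lub E l -> 0 < eps -> exists r, E r /\ l - eps < r.
Proof.
  intros [_ Hleast] Heps. apply NNPP. intros Hnone.
  assert (Hub : is_upper_bound E (l - eps)).
  { intros r Hr. apply Rnot_lt_le. intros Hlt. apply Hnone. now exists r. }
  specialize (Hleast _ Hub). lra.
Qed.

Definition allocation_value (p : nat -> R) (f : nat -> R -> R) (v : nat -> R) (n : nat) : R :=
  sum1 (fun s => gPE (p s) (f s) (v s)) n.

Definition feasible_allocation (Delta : R) (v : nat -> R) (n : nat) : Prop :=
  (forall s, (1 <= s <= n)%nat -> 0 <= v s) /\ sum1 v n <= Delta.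

Lemma feasible_allocation_bounded Delta v n s :
  feasible_allocation Delta v n -> (1 <= s <= n)%nat -> 0 <= v s <= Delta.
Proof.
  intros [Hnn Hsum] Hs. split; [now apply Hnn|].
  eapply Rle_trans; [apply sum1_term_le|]; eauto.
Qed.

Lemma feasible_allocation_pred Delta v n :
  feasible_allocation Delta v (S n) -> feasible_allocation Delta v n.
Proof.
  intros [Hnn Hsum]. split; [intros; apply Hnn; lia|].
  simpl in Hsum. assert (0 <= v (S n)) by (apply Hnn; lia). lra.
Qed.

Section OptimalValue.

Variables (Delta : R) (p : nat -> R) (f : nat -> R -> R).

Lemma allocation_value_le_eta n e v :
  is_eta_opt Delta p f n e -> feasible_allocation Delta v n -> allocation_value p f v n <= e.
Proof. intros [Hub _] [Hnn Hsum]. apply Hub. now exists v. Qed.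

Lemma eta_approx n e eps : is_eta_opt Delta p f n e -> 0 < eps ->
  exists v, feasible_allocation Delta v n /\ e - eps < allocation_value p f v n.
Proof.
  intros He Heps. destruct (is_lub_approx _ _ _ He Heps) as [r [[v [Hnn [Hsum ->]]] Hr]].
  exists v. split; [split|]; assumption.
Qed.

Lemma eta_0 e : 0 <= Delta -> is_eta_opt Delta p f 0 e -> e = 0.
Proof.
  intros HD [Hub Hleast].
  assert (0 <= e).
  { apply Hub. exists (fun _ => 0). simpl. split; [lia | split; [lra | ring]]. }
  assert (e <= 0) by (apply Hleast; intros r [v [_ [_ ->]]]; simpl; lra).
  lra.
Qed.

Lemma eta_le_succ n e1 e2 :
  is_eta_opt Delta p f n e1 -> is_eta_opt Delta p f (S n) e2 -> e1 <= e2.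
Proof.
  intros [_ Hleast] He2. apply Hleast. intros r [v [Hnn [Hsum ->]]].
  set (v' := fun s => if Nat.leb s n then v s else 0).
  assert (Hv' : forall s, (1 <= s <= n)%nat -> v' s = v s).
  { intros s Hs. unfold v'. now rewrite (proj2 (Nat.leb_le s n)) by lia. }
  assert (Hlast : v' (S n) = 0) by (unfold v'; now rewrite (proj2 (Nat.leb_gt (S n) n)) by lia).
  replace (sum1 (fun s => gPE (p s) (f s) (v s)) n) with (allocation_value p f v' (S n)).
  - apply (allocation_value_le_eta _ _ _ He2). split.
    + intros s Hs. destruct (Nat.eq_dec s (S n)) as [->|]; [lra|].
      rewrite Hv' by lia. apply Hnn. lia.
    + simpl. rewrite Hlast, (sum1_ext v' v) by exact Hv'. lra.
  - unfold allocation_value. simpl. rewrite Hlast, gPE_0.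
    rewrite Rplus_0_r. apply sum1_ext. intros s Hs. now rewrite Hv'.
Qed.

Lemma eta_succ_le n e1 e2 G :
  is_eta_opt Delta p f n e1 -> is_eta_opt Delta p f (S n) e2 ->
  (forall x, 0 <= x <= Delta -> gPE (p (S n)) (f (S n)) x <= G) -> e2 <= e1 + G.
Proof.
  intros He1 [_ Hleast] HG. apply Hleast. intros r [v [Hnn [Hsum ->]]].
  assert (Hv : feasible_allocation Delta v (S n)) by now split.
  simpl. pose proof (allocation_value_le_eta n e1 v He1 (feasible_allocation_pred _ _ _ Hv)).
  assert (gPE (p (S n)) (f (S n)) (v (S n)) <= G).
  { apply HG. apply (feasible_allocation_bounded _ _ _ _ Hv). lia. }
  unfold allocation_value in *. lra.
Qed.

End OptimalValue.

Lemma mixing_weight_exists Delta X B a :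
  0 <= X -> 0 <= B <= Delta -> 0 <= a -> X + a <= Delta ->
  exists lam, 0 <= lam <= 1 /\ B + lam * (X - B) + a <= Delta /\ X - lam * (X - B) <= X + a.
Proof.
  intros HX HB Ha HXa.
  destruct (Rle_dec B X); [exists 1; lra|].
  destruct (Rle_dec (B + a) Delta); [exists 0; lra|].
  exists ((B + a - Delta) / (B - X)).
  replace ((B + a - Delta) / (B - X) * (X - B)) with (Delta - B - a) by (field; lra).
  split; [split; [apply Rdiv_nonneg | apply Rdiv_le_one] |]; lra.
Qed.

Lemma allocation_value_exchange Delta p f n a b lam :
  (forall s, (1 <= s <= n)%nat -> elasticity_fun Delta (f s)) ->
  feasible_allocation Delta a n -> feasible_allocation Delta b n -> 0 <= lam <= 1 ->
  allocation_value p f a n + allocation_value p f b n <=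
  allocation_value p f (fun s => b s + lam * (a s - b s)) n +
  allocation_value p f (fun s => a s - lam * (a s - b s)) n.
Proof.
  intros Hf Ha Hb Hlam. unfold allocation_value. rewrite <- !sum1_plus.
  apply sum1_le. intros s Hs.
  apply (gPE_exchange Delta); [apply Hf | eapply feasible_allocation_bounded .. | ]; eauto.
Qed.

(* c keeps the last good of a and mixes a and b on the first n goods; e is the
   complementary mix. *)
Lemma allocation_exchange Delta p f n a b :
  (forall s, (1 <= s <= n)%nat -> elasticity_fun Delta (f s)) ->
  feasible_allocation Delta a (S n) -> feasible_allocation Delta b n ->
  exists c e, feasible_allocation Delta c (S n) /\ feasible_allocation Delta e n /\
    sum1 e n <= sum1 a (S n) /\
    allocation_value p f a (S n) + allocation_value p f b n <=
    allocation_value p f c (S n) + allocation_value p f e n.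
Proof.
  intros Hf Ha Hb. pose proof (feasible_allocation_pred _ _ _ Ha) as Ha'.
  destruct Ha as [Ha_nn Ha_sum]. destruct Hb as [Hb_nn Hb_sum].
  assert (Hlast : 0 <= a (S n)) by (apply Ha_nn; lia).
  simpl in Ha_sum.
  destruct (mixing_weight_exists Delta (sum1 a n) (sum1 b n) (a (S n)))
    as [lam [Hlam [Hc_sum He_sum]]];
    [apply sum1_nonneg; intros; apply Ha_nn; lia | split; [apply sum1_nonneg|]; auto | lra | lra |].
  set (mix := fun s => b s + lam * (a s - b s)).
  set (e := fun s => a s - lam * (a s - b s)).
  set (c := fun s => if Nat.eqb s (S n) then a s else mix s).
  assert (Hc_mix : forall s, (1 <= s <= n)%nat -> c s = mix s).
  { intros s Hs. unfold c. now rewrite (proj2 (Nat.eqb_neq s (S n))) by lia. }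
  assert (Hc_last : c (S n) = a (S n)) by (unfold c; now rewrite Nat.eqb_refl).
  assert (Hmix_sum : sum1 mix n = sum1 b n + lam * (sum1 a n - sum1 b n)).
  { unfold mix. now rewrite sum1_plus, sum1_scal, sum1_minus. }
  assert (He_sum' : sum1 e n = sum1 a n - lam * (sum1 a n - sum1 b n)).
  { unfold e. now rewrite sum1_minus, sum1_scal, sum1_minus. }
  assert (Hconvex : forall s, (1 <= s <= n)%nat -> 0 <= mix s /\ 0 <= e s).
  { intros s Hs. assert (0 <= a s) by (apply Ha_nn; lia). assert (0 <= b s) by auto.
    unfold mix, e. nra. }
  exists c, e. split; [|split; [|split]].
  - split.
    + intros s Hs. destruct (Nat.eq_dec s (S n)) as [->|]; [lra|].
      rewrite Hc_mix by lia. apply Hconvex. lia.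
    + simpl. rewrite Hc_last, (sum1_ext c mix), Hmix_sum by exact Hc_mix. lra.
  - split; [intros; apply Hconvex; lia | lra].
  - simpl. lra.
  - pose proof (allocation_value_exchange Delta p f n a b lam Hf Ha' (conj Hb_nn Hb_sum) Hlam).
    unfold allocation_value in *. simpl. rewrite Hc_last.
    rewrite (sum1_ext (fun s => gPE (p s) (f s) (c s)) (fun s => gPE (p s) (f s) (mix s)))
      by (intros s Hs; now rewrite Hc_mix).
    unfold mix, e. lra.
Qed.

Definition eta_increment (eta : nat -> R) (t : nat) : R := eta t - eta (t - 1)%nat.

Section IncrementalOptimum.

Variables (Delta : R) (p : nat -> R) (f : nat -> R -> R) (T : nat) (eta : nat -> R).
Hypothesis HD : 0 <= Delta.
Hypothesis Hf : forall t, (1 <= t <= T)%nat -> elasticity_fun Delta (f t).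
Hypothesis Heta : forall t, (t <= T)%nat -> is_eta_opt Delta p f t (eta t).

Lemma eta_increment_nonneg t : (1 <= t <= T)%nat -> 0 <= eta_increment eta t.
Proof.
  intros Ht. unfold eta_increment. destruct t as [|t]; [lia|].
  rewrite Nat.sub_succ, Nat.sub_0_r.
  assert (eta t <= eta (S t)) by (apply (eta_le_succ Delta p f t); apply Heta; lia).
  lra.
Qed.

Lemma eta_increment_le_max t G : (1 <= t <= T)%nat ->
  (forall x, 0 <= x <= Delta -> gPE (p t) (f t) x <= G) -> eta_increment eta t <= G.
Proof.
  intros Ht HG. unfold eta_increment. destruct t as [|t]; [lia|].
  rewrite Nat.sub_succ, Nat.sub_0_r.
  assert (eta (S t) <= eta t + G) by (apply (eta_succ_le Delta p f t); auto; apply Heta; lia).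
  lra.
Qed.

Lemma cr_pursuit_output_le_eta_increment t piv x :
  (1 <= t <= T)%nat -> 0 < p t -> 1 <= piv ->
  cr_pursuit_output Delta (p t) (f t) (eta_increment eta t / piv) x ->
  x <= 2 * (eta_increment eta t / piv) / (p t * (1 + sqrt (1 - 1 / piv))).
Proof.
  intros Ht Hp Hpi Hx.
  destruct (gPE_attains_max Delta (p t) (f t) (Hf t Ht) HD) as [w [Hw Hmax]].
  apply (cr_pursuit_output_le_increment Delta (p t) (f t) piv _ w x (Hf t Ht));
    auto using eta_increment_nonneg, eta_increment_le_max.
Qed.

Variable y : R.
Hypothesis Hy : 0 <= y.

Definition increment_mass_below (n : nat) : R :=
  sum1 (fun t => if Rle_dec (p t) y then eta_increment eta t else 0) n.

(* The induction needs every feasible a, not only near-optimal ones: when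
   p (S n) > y, a is exchanged against a near-optimal allocation b of the first
   n goods and the hypothesis is applied to the complementary mix. *)
Lemma increment_mass_below_value_le n : (n <= T)%nat ->
  forall a, feasible_allocation Delta a n ->
  increment_mass_below n + (allocation_value p f a n - y * sum1 a n) <= eta n.
Proof.
  induction n as [|n IH]; intros Hn a Ha.
  - unfold increment_mass_below, allocation_value. simpl.
    rewrite (eta_0 Delta p f (eta 0%nat) HD (Heta 0%nat ltac:(lia))). lra.
  - unfold increment_mass_below. simpl. fold (increment_mass_below n).
    pose proof (feasible_allocation_bounded _ _ _ (S n) Ha ltac:(lia)) as Hlast.
    destruct (Rle_dec (p (S n)) y) as [Hpy|_].
    + pose proof (IH ltac:(lia) a (feasible_allocation_pred _ _ _ Ha)).
      pose proof (gPE_le_linear Delta (p (S n)) (f (S n)) (Hf (S n) ltac:(lia)) _ Hlast).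
      assert (p (S n) * a (S n) <= y * a (S n)) by (apply Rmult_le_compat_r; lra).
      unfold eta_increment, allocation_value in *. simpl in *.
      rewrite Nat.sub_0_r in *. lra.
    + apply Rle_plus_epsilon. intros eps Heps.
      destruct (eta_approx Delta p f n (eta n) eps (Heta n ltac:(lia)) Heps) as [b [Hb Hbv]].
      destruct (allocation_exchange Delta p f n a b ltac:(intros; apply Hf; lia) Ha Hb)
        as [c [e [Hc [He [He_sum Hval]]]]].
      pose proof (IH ltac:(lia) e He).
      pose proof (allocation_value_le_eta Delta p f (S n) (eta (S n)) c (Heta (S n) Hn) Hc).
      assert (y * sum1 e n <= y * sum1 a (S n)) by (apply Rmult_le_compat_l; lra).
      simpl sum1 in *. lra.
Qed.

Lemma increment_mass_below_le : increment_mass_below T <= y * Delta.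
Proof.
  apply Rle_plus_epsilon. intros eps Heps.
  destruct (eta_approx Delta p f T (eta T) eps (Heta T (Nat.le_refl T)) Heps) as [a [Ha Hav]].
  pose proof (increment_mass_below_value_le T (Nat.le_refl T) a Ha).
  assert (y * sum1 a T <= y * Delta) by (apply Rmult_le_compat_l; [exact Hy | apply Ha]).
  lra.
Qed.

End IncrementalOptimum.

Definition lsum (h : R * R -> R) (L : list (R * R)) : R :=
  fold_right (fun x acc => h x + acc) 0 L.

Lemma lsum_app h l1 l2 : lsum h (l1 ++ l2) = lsum h l1 + lsum h l2.
Proof. induction l1; simpl; [|rewrite IHl1]; lra. Qed.

Lemma lsum_middle h l1 x l2 : lsum h (l1 ++ x :: l2) = lsum h (l1 ++ l2) + h x.
Proof. rewrite !lsum_app. simpl. lra. Qed.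

Lemma lsum_map_seq h (F : nat -> R * R) n :
  lsum h (map F (seq 1 n)) = sum1 (fun t => h (F t)) n.
Proof. induction n; [reflexivity|]. rewrite seq_S, map_app, lsum_app, IHn. simpl. lra. Qed.

Lemma exists_max_snd (L : list (R * R)) :
  L <> nil -> exists x, In x L /\ forall z, In z L -> snd z <= snd x.
Proof.
  induction L as [|a L IH]; intros Hne; [congruence|].
  destruct L as [|b L].
  - exists a. split; [now left|]. intros z [<-|[]]. lra.
  - destruct IH as [x [Hx Hmax]]; [discriminate|].
    destruct (Rle_dec (snd a) (snd x)).
    + exists x. split; [now right|]. intros z [<-|Hz]; auto.
    + exists a. split; [now left|]. intros z [<-|Hz]; [lra|]. specialize (Hmax z Hz). lra.
Qed.

Lemma one_sub_div_le_ln a b : 0 < a -> 0 < b -> 1 - a / b <= ln (b / a).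
Proof.
  intros Ha Hb. pose proof (exp_ineq1_le (ln (a / b))) as H.
  rewrite exp_ln in H by (apply Rdiv_lt_0_compat; lra).
  replace (a / b) with (/ (b / a)) in H by (field; lra).
  rewrite ln_Rinv in H by (apply Rdiv_lt_0_compat; lra).
  replace (a / b) with (/ (b / a)) by (field; lra). lra.
Qed.

Lemma log_bound_shift m D tot p0 q :
  0 < m -> 0 <= D -> 0 < p0 <= q -> tot <= p0 * D ->
  tot / p0 + D * ln (p0 / m) <= tot / q + D * ln (q / m).
Proof.
  intros Hm HD Hq Htot.
  replace (ln (q / m)) with (ln (q / p0) + ln (p0 / m))
    by (rewrite <- ln_mult by (apply Rdiv_lt_0_compat; lra); f_equal; field; lra).
  pose proof (one_sub_div_le_ln p0 q ltac:(lra) ltac:(lra)).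
  assert (Hw : 0 <= (q - p0) / (p0 * q)) by (apply Rdiv_nonneg; nra).
  assert (tot * ((q - p0) / (p0 * q)) <= p0 * D * ((q - p0) / (p0 * q)))
    by (apply Rmult_le_compat_r; assumption).
  replace (tot / p0) with (tot / q + tot * ((q - p0) / (p0 * q))) by (field; lra).
  replace (p0 * D * ((q - p0) / (p0 * q))) with (D * (1 - p0 / q)) in H0 by (field; lra).
  assert (D * (1 - p0 / q) <= D * ln (q / p0)) by (apply Rmult_le_compat_l; lra).
  lra.
Qed.

Section AbelSummation.

Variables (m D : R).
Hypothesis Hm : 0 < m.
Hypothesis HD : 0 <= D.

Definition mass_below (y : R) (L : list (R * R)) : R :=
  lsum (fun x => if Rle_dec (snd x) y then fst x else 0) L.

Lemma mass_below_total y L : (forall x, In x L -> snd x <= y) -> mass_below y L = lsum fst L.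
Proof.
  induction L as [|a L IH]; intros H; [reflexivity|]. unfold mass_below in *. simpl.
  destruct (Rle_dec (snd a) y) as [_|Hn]; [|exfalso; apply Hn, H; now left].
  rewrite IH; [reflexivity|]. intros; apply H; now right.
Qed.

(* Abel summation in disguise: peel off the largest price p0, whose goods
   carry at most p0 D in total, and trade 1/p0 - 1/q against ln (q/p0). *)
Lemma ratio_sum_le_log n : forall L, (length L <= n)%nat ->
  (forall x, In x L -> 0 <= fst x /\ m <= snd x) ->
  (forall y, m <= y -> mass_below y L <= y * D) ->
  forall q, m <= q -> (forall x, In x L -> snd x <= q) ->
  lsum (fun x => fst x / snd x) L <= lsum fst L / q + D * ln (q / m).
Proof.
  assert (Hlog : forall q, m <= q -> 0 <= D * ln (q / m)).
  { intros q Hq. apply Rmult_le_pos; [exact HD|].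
    pose proof (one_sub_div_le_ln m q Hm ltac:(lra)).
    pose proof (Rdiv_le_one m q Hq ltac:(lra)). lra. }
  induction n as [|n IH]; intros L Hlen HL Hmass q Hq HLq.
  all: destruct L as [|x L]; [|simpl in Hlen; try lia].
  1, 2: simpl; replace (0 / q) with 0 by (unfold Rdiv; ring); pose proof (Hlog q Hq); lra.
  set (L0 := x :: L) in *.
  destruct (exists_max_snd L0 ltac:(discriminate)) as [x0 [Hx0 Hmax]].
  destruct (in_split x0 L0 Hx0) as [l1 [l2 Hsplit]].
  assert (Hin : forall z, In z (l1 ++ l2) -> In z L0).
  { intros z Hz. rewrite Hsplit. apply in_app_or in Hz. apply in_or_app. simpl. tauto. }
  destruct (HL x0 Hx0) as [Hd0 Hp0].
  assert (Hrest : forall y, m <= y -> mass_below y (l1 ++ l2) <= y * D).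
  { intros y Hy. specialize (Hmass y Hy). unfold mass_below in *.
    rewrite Hsplit, lsum_middle in Hmass. destruct Rle_dec; lra. }
  assert (IHrest := IH (l1 ++ l2)
    ltac:(apply (f_equal (@length _)) in Hsplit; unfold L0 in Hsplit;
          simpl in Hsplit; rewrite !length_app in *; simpl in Hsplit; lia)
    ltac:(intros; apply HL, Hin; assumption) Hrest (snd x0) Hp0
    ltac:(intros; apply Hmax, Hin; assumption)).
  assert (Htot : lsum fst L0 <= snd x0 * D).
  { rewrite <- (mass_below_total (snd x0) L0 Hmax). apply Hmass. exact Hp0. }
  rewrite Hsplit in Htot |- *. rewrite !lsum_middle in *.
  eapply Rle_trans; [|apply (log_bound_shift m D _ (snd x0) q Hm HD ltac:(split; [lra | auto]) Htot)].
  replace ((lsum fst (l1 ++ l2) + fst x0) / snd x0)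
    with (lsum fst (l1 ++ l2) / snd x0 + fst x0 / snd x0) by (field; lra).
  lra.
Qed.

Lemma sum1_ratio_le_log (d p : nat -> R) n M :
  m <= M -> (forall t, (1 <= t <= n)%nat -> 0 <= d t /\ m <= p t <= M) ->
  (forall y, m <= y -> sum1 (fun t => if Rle_dec (p t) y then d t else 0) n <= y * D) ->
  sum1 (fun t => d t / p t) n <= D * (1 + ln (M / m)).
Proof.
  intros HM Hdp Hmass.
  set (L := map (fun t => (d t, p t)) (seq 1 n)).
  assert (HinL : forall x, In x L -> exists t, (1 <= t <= n)%nat /\ x = (d t, p t)).
  { intros x Hx. apply in_map_iff in Hx. destruct Hx as [t [<- Ht]].
    apply in_seq in Ht. exists t. split; [lia | reflexivity]. }
  assert (HL : forall x, In x L -> 0 <= fst x /\ m <= snd x /\ snd x <= M).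
  { intros x Hx. destruct (HinL x Hx) as [t [Ht ->]]. simpl. pose proof (Hdp t Ht). lra. }
  assert (HLmass : forall y, m <= y -> mass_below y L <= y * D).
  { intros y Hy. unfold mass_below, L. rewrite lsum_map_seq. now apply Hmass. }
  pose proof (ratio_sum_le_log (length L) L (le_n _)
    ltac:(intros x Hx; pose proof (HL x Hx); lra) HLmass M HM
    ltac:(intros x Hx; apply HL, Hx)) as Hratio.
  assert (Htot : lsum fst L / M <= D).
  { apply (Rmult_le_reg_r M); [lra|].
    replace (lsum fst L / M * M) with (lsum fst L) by (field; lra).
    rewrite <- (mass_below_total M L) by (intros x Hx; apply HL, Hx).
    rewrite Rmult_comm. apply HLmass. exact HM. }
  replace (lsum (fun x => fst x / snd x) L) with (sum1 (fun t => d t / p t) n)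
    in Hratio by (symmetry; apply lsum_map_seq).
  lra.
Qed.

End AbelSummation.

Theorem lemma15
  (Delta m M piv : R) (T : nat) (p : nat -> R) (f : nat -> R -> R)
  (eta : nat -> R) (vbar : nat -> R) :
  0 < Delta -> 0 < m -> m <= M -> 1 <= piv -> (1 <= T)%nat ->
  (forall t, (1 <= t <= T)%nat -> m <= p t <= M /\ elasticity_fun Delta (f t)) ->
  (forall t, (t <= T)%nat -> is_eta_opt Delta p f t (eta t)) ->
  (forall t, (1 <= t <= T)%nat ->
     cr_pursuit_output Delta (p t) (f t) ((eta t - eta (t - 1)%nat) / piv) (vbar t)) ->
  sum1 vbar T <=
    2 * Delta / (piv * (1 + sqrt (1 - 1 / piv))) * (ln (M / m) + 1).
Proof.
  intros HD Hm HmM Hpi _ Hpf Heta Hcr.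
  assert (Hf : forall t, (1 <= t <= T)%nat -> elasticity_fun Delta (f t)) by apply Hpf.
  set (K := 2 / (piv * (1 + sqrt (1 - 1 / piv)))).
  assert (HK : 0 <= K) by (apply Rdiv_nonneg; [lra | pose proof (sqrt_pos (1 - 1 / piv)); nra]).
  assert (Hstep : forall t, (1 <= t <= T)%nat -> vbar t <= K * (eta_increment eta t / p t)).
  { intros t Ht. destruct (Hpf t Ht) as [Hp _].
    pose proof (cr_pursuit_output_le_eta_increment Delta p f T eta ltac:(lra) Hf Heta
                  t piv (vbar t) Ht ltac:(lra) Hpi (Hcr t Ht)).
    replace (K * (eta_increment eta t / p t))
      with (2 * (eta_increment eta t / piv) / (p t * (1 + sqrt (1 - 1 / piv)))).
    - assumption.
    - unfold K. field. pose proof (sqrt_pos (1 - 1 / piv)). repeat split; lra. }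
  assert (Hratio : sum1 (fun t => eta_increment eta t / p t) T <= Delta * (1 + ln (M / m))).
  { apply (sum1_ratio_le_log m Delta Hm ltac:(lra) (eta_increment eta) p T M HmM).
    - intros t Ht. split; [apply (eta_increment_nonneg Delta p f T)|apply Hpf]; auto.
    - intros y Hy. apply (increment_mass_below_le Delta p f T eta); auto; lra. }
  apply Rle_trans with (K * sum1 (fun t => eta_increment eta t / p t) T).
  - rewrite <- sum1_scal. now apply sum1_le.
  - replace (2 * Delta / (piv * (1 + sqrt (1 - 1 / piv))) * (ln (M / m) + 1))
      with (K * (Delta * (1 + ln (M / m)))) by (unfold K; unfold Rdiv; ring).
    apply Rmult_le_compat_l; assumption.
Qed.
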